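(* Let $n,m\ge1$ be integers (not necessarily distinct). Then \[ \mathcal{R}_{\mathcal{BOOL}}(n,m)=\mathcal{R}_{\mathcal{IDM}}(n,m)=\mathcal{R}_{\mathcal{PO}}(n,m)=(n-1)(m-1)+1 . \]
   Context: For a commutative ring $R$ (with $1\ne0$), the idempotents graph $\mathrm{Idm}(R)$ is the simple undirected graph whose vertices are the idempotents of $R$, distinct $a,b$ adjacent iff $a\mid b$ or $b\mid a$. $\mathcal{IDM}$ is the class of all idempotents graphs of commutative rings, and $\mathcal{BOOL}\subseteq\mathcal{IDM}$ the class of idempotents graphs of Boolean rings. $\mathcal{PO}$ is the class of partial order graphs $G_A$ of posets $(A,\le)$ (distinct vertices adjacent iff comparable). For a class $\mathcal{C}$ of graphs, $\mathcal{R}_{\mathcal{C}}(n,m)$ is the minimal $r$ such that every induced subgraph with $r$ vertices of any graph in $\mathcal{C}$ contains either $K_n$ or an independent set of $m$ vertices. *)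

From HB Require Import structures.
From mathcomp Require Import all_boot all_order all_algebra.
Set Implicit Arguments. Unset Strict Implicit. Unset Printing Implicit Defensive.
Import Order.TTheory GRing.Theory.
Local Open Scope ring_scope.

(* A (simple, undirected) graph: a vertex predicate on a carrier type and an
   adjacency relation (only used on distinct vertices). *)
Record graph := Graph {
  gV : eqType;
  gvert : gV -> Prop;
  gadj : gV -> gV -> Prop }.

Definition has_clique (V : eqType) (adj : V -> V -> Prop) (S : seq V) (k : nat) :=
  exists T : seq V, [/\ uniq T, size T = k, {subset T <= S} &
    forall x y, x \in T -> y \in T -> x <> y -> adj x y].

Definition has_indep (V : eqType) (adj : V -> V -> Prop) (S : seq V) (k : nat) :=
  exists T : seq V, [/\ uniq T, size T = k, {subset T <= S} &
    forall x y, x \in T -> y \in T -> x <> y -> ~ adj x y].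

Definition ramsey_prop (C : graph -> Prop) (n m r : nat) :=
  forall G : graph, C G ->
  forall S : seq (gV G), uniq S -> size S = r -> (forall x, x \in S -> @gvert G x) ->
    has_clique (@gadj G) S n \/ has_indep (@gadj G) S m.

Definition ramsey_number_is (C : graph -> Prop) (n m N : nat) :=
  ramsey_prop C n m N /\ forall r, (r < N)%N -> ~ ramsey_prop C n m r.

Definition rdivides (R : comNzRingType) (a b : R) := exists c : R, b = a * c.

Definition idempotent (R : comNzRingType) (e : R) := e * e = e.

Definition Idm (R : comNzRingType) : graph :=
  @Graph R (@idempotent R) (fun a b => a <> b /\ (rdivides a b \/ rdivides b a)).

Definition boolean_ring (R : comNzRingType) := forall x : R, x * x = x.

Definition IDM (G : graph) := exists R : comNzRingType, G = Idm R.

Definition BOOL (G : graph) := exists R : comNzRingType, boolean_ring R /\ G = Idm R.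

Definition PO_graph (d : Order.disp_t) (T : porderType d) : graph :=
  @Graph T (fun _ => True) (fun a b => a <> b /\ ((a <= b)%O \/ (b <= a)%O)).

Definition PO (G : graph) := exists (d : Order.disp_t) (T : porderType d), G = PO_graph T.

(* Idempotents ordered by divisibility (e | f iff f = e f) and partial orders
   are both comparability graphs of strict orders, so Mirsky's theorem gives
   the upper bound: the maximal elements of a set form an antichain, and if
   there are at most m of them, a chain of k points among the remaining more
   than (k - 1) * m extends by a maximal element above its top.  The bound is
   sharp: m disjoint chains of n points, realised as the row down-sets
   {(i, j') | j' <= j} of the grid 'I_m * 'I_n, contain neither n + 1
   comparable nor m + 1 incomparable points; these sets embed in the subset
   order and, through their indicator functions, in the idempotents of a
   Boolean ring. *)

From HB Require Import structures.
From Pilot Require Import Defs.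
From mathcomp Require Import all_boot all_order all_algebra.
From mathcomp Require Import zify.
Set Implicit Arguments. Unset Strict Implicit. Unset Printing Implicit Defensive.
Import Order.TTheory GRing.Theory.
Import Order.DefaultSetSubsetOrder.

Section StrictOrder.
Variables (V : eqType) (lt : rel V).
Hypothesis lt_irr : irreflexive lt.
Hypothesis lt_trans : transitive lt.

Definition comparable_by x y := lt x y || lt y x.

Definition chain (C : seq V) :=
  forall x y, x \in C -> y \in C -> x != y -> comparable_by x y.

Definition antichain (A : seq V) :=
  forall x y, x \in A -> y \in A -> x != y -> ~~ comparable_by x y.

Definition maximals (S : seq V) := [seq x <- S | ~~ has (lt x) S].

Definition non_maximals (S : seq V) := [seq x <- S | has (lt x) S].

Lemma exists_maximal_above (S : seq V) x : x \in S ->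
  exists2 y, y \in maximals S & (y == x) || lt x y.
Proof.
have [k] := ubnP (count (lt x) S); elim: k x => // k IH x ltxk xS.
have [/hasP [z zS ltxz] | maxx] := boolP (has (lt x) S); last first.
  by exists x; rewrite ?eqxx // mem_filter maxx.
have lt_count : count (lt z) S < count (lt x) S.
  set above_x := [seq w <- S | lt x w].
  have -> : count (lt z) S = count (lt z) above_x.
    rewrite count_filter; apply: eq_count => w /=.
    by case: (boolP (lt z w)) => //= /(lt_trans ltxz) ->.
  have -> : count (lt x) S = size above_x by rewrite size_filter.
  rewrite -(count_predC (lt z) above_x) -{1}[count _ above_x]addn0 ltn_add2l.
  by rewrite -has_count; apply/hasP; exists z; rewrite /= ?mem_filter ?ltxz ?lt_irr.
have [y ymax zy] := IH z (leq_trans lt_count ltxk) zS.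
exists y => //; case/orP: zy => [/eqP -> | /(lt_trans ltxz) ->]; by rewrite ?ltxz orbT.
Qed.

Lemma maximals_antichain S : antichain (maximals S).
Proof.
move=> x y; rewrite !mem_filter => /andP [xmax xS] /andP [ymax yS] _.
by apply/orP => -[ltxy | ltyx]; [case/hasP: xmax; exists y | case/hasP: ymax; exists x].
Qed.

Lemma size_maximals S : size (maximals S) + size (non_maximals S) = size S.
Proof. by rewrite !size_filter addnC count_predC. Qed.

Lemma chain_extend S C c : chain C -> c \in C -> {subset C <= non_maximals S} ->
  exists2 y, (y \in S) && (y \notin C) & forall x, x \in C -> lt x y.
Proof.
move=> chC cC CS.
have [t] := exists_maximal_above cC; rewrite mem_filter => /andP [tmax tC] _.
have /hasP [z zS ltz] : has (lt t) S by have := CS t tC; rewrite mem_filter => /andP [].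
have [y] := exists_maximal_above zS; rewrite mem_filter => /andP [ymax yS] zy.
have ltty : lt t y by case/orP: zy => [/eqP -> // | /(lt_trans ltz)].
exists y.
  rewrite yS; apply/negP => /CS; rewrite mem_filter => /andP [yCS _].
  by rewrite yCS in ymax.
move=> x xC; have [-> // | xt] := eqVneq x t.
case/orP: (chC x t xC tC xt) => [ltxt | lttx]; first exact: lt_trans ltxt ltty.
by case/hasP: tmax; exists x.
Qed.

Theorem mirsky k m S : uniq S -> k * m < size S ->
  (exists C, [/\ uniq C, size C = k.+1, {subset C <= S} & chain C]) \/
  (exists A, [/\ uniq A, size A = m.+1, {subset A <= S} & antichain A]).
Proof.
elim: k S => [|k IH] S uS.
  case: S uS => // x S _ _; left; exists [:: x]; split => //.
    by move=> y; rewrite inE => /eqP ->; rewrite mem_head.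
  by move=> a b; rewrite !inE => /eqP -> /eqP ->; rewrite eqxx.
move=> ltS; have [m_lt | le_m] := leqP m.+1 (size (maximals S)).
  right; exists (take m.+1 (maximals S)); split.
  - by rewrite take_uniq // filter_uniq.
  - by rewrite size_take_min; apply/minn_idPl.
  - by move=> x /mem_take; rewrite mem_filter => /andP [].
  - by move=> x y /mem_take xS /mem_take; apply: maximals_antichain.
have ltS' : k * m < size (non_maximals S).
  by move: ltS; rewrite mulSn -size_maximals; lia.
have [[C [uC sizeC CS chC]] | [A [uA sizeA AS acA]]] := IH _ (filter_uniq _ uS) ltS'; last first.
  by right; exists A; split => // x /AS; rewrite mem_filter => /andP [].
have [c cC] : exists c, c \in C.
  by case: C sizeC {uC CS chC} => // c C _; exists c; rewrite mem_head.
have [y /andP [yS yC] ltCy] := chain_extend chC cC CS.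
left; exists (y :: C); split; rewrite /= ?yC ?sizeC //.
  by move=> x; rewrite inE => /orP [/eqP -> // | /CS]; rewrite mem_filter => /andP [].
move=> a b; rewrite !inE => /orP [/eqP -> | aC] /orP [/eqP -> | bC]; rewrite ?eqxx //.
- by rewrite /comparable_by ltCy ?orbT.
- by rewrite /comparable_by ltCy.
- exact: chC.
Qed.

End StrictOrder.

Lemma ramsey_of_strict_order (V : eqType) (lt : rel V) (adj : V -> V -> Prop) n m S :
  irreflexive lt -> transitive lt -> uniq S -> size S = (n * m).+1 ->
  {in S &, forall x y, x <> y -> adj x y <-> comparable_by lt x y} ->
  has_clique adj S n.+1 \/ has_indep adj S m.+1.
Proof.
move=> lt_irr lt_trans uS sizeS adjE; have ltS : n * m < size S by rewrite sizeS.
have [[C [uC sizeC CS chC]] | [A [uA sizeA AS acA]]] := mirsky lt_irr lt_trans uS ltS.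
  left; exists C; split => // x y xC yC xy.
  by apply/(adjE _ _ (CS _ xC) (CS _ yC) xy); apply: chC => //; apply/eqP.
right; exists A; split => // x y xA yA xy.
by move/(adjE _ _ (AS _ xA) (AS _ yA) xy); apply/negP; apply: acA => //; apply/eqP.
Qed.

Section IdempotentOrder.
Variable R : comNzRingType.

Definition idem_lt (a b : R) := (a != b) && (b == a * b)%R.

Lemma idem_lt_irr : irreflexive idem_lt.
Proof. by move=> a; rewrite /idem_lt eqxx. Qed.

Lemma idem_lt_trans : transitive idem_lt.
Proof.
move=> b a c /andP [ab /eqP bE] /andP [bc /eqP cE]; apply/andP; split.
  by apply: contra ab => /eqP ac; subst c; rewrite {1}cE mulrC -bE.
by apply/eqP; rewrite [in LHS]cE [in LHS]bE -mulrA -cE.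
Qed.

Lemma rdivides_idemE (a b : R) : Defs.idempotent a -> rdivides a b <-> b = (a * b)%R.
Proof. by move=> idem_a; split => [[c ->] | bE]; [rewrite mulrA idem_a | exists b]. Qed.

Lemma Idm_adjE (a b : R) : Defs.idempotent a -> Defs.idempotent b -> a <> b ->
  @gadj (Idm R) a b <-> comparable_by idem_lt a b.
Proof.
move=> idem_a idem_b ab; have /eqP ab' := ab; have ba' : b != a by rewrite eq_sym.
rewrite /= !rdivides_idemE // /comparable_by /idem_lt ab' ba' /=.
split=> [[_ [] <-] | /orP [] /eqP E]; rewrite ?eqxx ?orbT //.
- by split; [| left].
- by split; [| right].
Qed.

End IdempotentOrder.

Lemma ramsey_prop_IDM n m : ramsey_prop IDM n.+1 m.+1 (n * m).+1.
Proof.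
move=> G [R ->] S uS sizeS idemS.
apply: (ramsey_of_strict_order (@idem_lt_irr R) (@idem_lt_trans R)) => // x y xS yS.
exact: Idm_adjE (idemS x xS) (idemS y yS).
Qed.

Lemma ramsey_prop_PO n m : ramsey_prop PO n.+1 m.+1 (n * m).+1.
Proof.
move=> G [d [T ->]] S uS sizeS _.
apply: (@ramsey_of_strict_order T <%O) => //; first exact: lt_trans.
move=> x y _ _ xy /=; have /eqP xy' := xy; have yx' : y != x by rewrite eq_sym.
rewrite /comparable_by !lt_neqAle xy' yx' /=.
by split=> [[_ [] ->] | /orP []]; rewrite ?orbT //; split=> //; [left | right].
Qed.

Lemma ramsey_prop_sub (C C' : graph -> Prop) n m r : (forall G, C G -> C' G) ->
  ramsey_prop C' n m r -> ramsey_prop C n m r.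
Proof. by move=> CC' ramseyC' G /CC'; apply: ramseyC'. Qed.

Lemma BOOL_IDM G : BOOL G -> IDM G.
Proof. by case=> R [_ ->]; exists R. Qed.

Lemma subset_map_preim (X Y : eqType) (f : X -> Y) (L : seq X) (T : seq Y) :
  {subset T <= map f L} -> exists P, T = map f P.
Proof.
elim: T => [|y T IH] TL; first by exists [::].
have /mapP [x _ ->] := TL y (mem_head _ _).
have [|P ->] := IH; first by move=> z zT; apply: TL; rewrite inE zT orbT.
by exists (x :: P).
Qed.

Lemma inj_neq (X Y : eqType) (f : X -> Y) x y : injective f -> x != y -> f x <> f y.
Proof. by move=> f_inj; rewrite -(inj_eq f_inj) => /eqP. Qed.

Section RowGraph.
Variables (G : graph) (a b : nat) (e : 'I_a * 'I_b -> gV G).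
Hypothesis e_inj : injective e.
Hypothesis e_adj : forall p q, p != q -> @gadj G (e p) (e q) <-> p.1 = q.1.

Lemma row_clique_size L k : has_clique (@gadj G) (map e L) k -> k <= b.
Proof.
case=> T [uT <- /subset_map_preim [P eT] cliqueP]; subst T.
rewrite (map_inj_uniq e_inj) in uT.
rewrite size_map -(card_uniqP uT) -[X in _ <= X](card_ord b).
apply: (leq_card_in snd) => p q pP qP p2q2; have [// | pq] := eqVneq p q.
apply: injective_projections p2q2.
exact: (e_adj pq).1 (cliqueP _ _ (map_f e pP) (map_f e qP) (inj_neq e_inj pq)).
Qed.

Lemma row_indep_size L k : has_indep (@gadj G) (map e L) k -> k <= a.
Proof.
case=> T [uT <- /subset_map_preim [P eT] indepP]; subst T.
rewrite (map_inj_uniq e_inj) in uT.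
rewrite size_map -(card_uniqP uT) -[X in _ <= X](card_ord a).
apply: (leq_card_in fst) => p q pP qP p1q1; have [// | pq] := eqVneq p q.
by case: (indepP _ _ (map_f e pP) (map_f e qP) (inj_neq e_inj pq)); apply/(e_adj pq).
Qed.

Lemma rows_not_ramsey (C : graph -> Prop) r : C G -> (forall p, @gvert G (e p)) ->
  r <= a * b -> ~ ramsey_prop C b.+1 a.+1 r.
Proof.
move=> CG e_vert r_le ramseyC; set L := take r (enum {: 'I_a * 'I_b}).
have sizeL : size (map e L) = r.
  by rewrite size_map size_take_min; apply/minn_idPl; rewrite -cardE card_prod !card_ord.
have uL : uniq (map e L) by rewrite map_inj_uniq // take_uniq // enum_uniq.
have vL : forall x, x \in map e L -> @gvert G x by move=> x /mapP [p _ ->].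
by case: (ramseyC G CG _ uL sizeL vL) => [/row_clique_size | /row_indep_size]; rewrite ltnn.
Qed.

End RowGraph.

Section RowDownsets.
Variables a b : nat.

Definition row_downset (p : 'I_a * 'I_b) : {set 'I_a * 'I_b} :=
  [set u : 'I_a * 'I_b | (u.1 == p.1) && (u.2 <= p.2)].

Lemma row_downset_subset p q :
  (row_downset p \subset row_downset q) = (p.1 == q.1) && (p.2 <= q.2).
Proof.
apply/subsetP/andP => [sub_pq | [/eqP p1q1 p2q2] u].
  by have := sub_pq p; rewrite !inE eqxx leqnn => /(_ isT) /andP [].
by rewrite !inE => /andP [/eqP -> u2p2]; rewrite p1q1 eqxx (leq_trans u2p2 p2q2).
Qed.

Lemma row_downset_inj : injective row_downset.
Proof.
move=> p q epq; have := row_downset_subset p q; have := row_downset_subset q p.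
rewrite epq subxx => /esym /andP [_ q2p2] /esym /andP [/eqP p1q1 p2q2].
by apply: injective_projections p1q1 _; apply/val_inj/anti_leq; rewrite p2q2 q2p2.
Qed.

Lemma row_downset_comparable p q :
  (row_downset p \subset row_downset q) || (row_downset q \subset row_downset p) = (p.1 == q.1).
Proof.
by rewrite !row_downset_subset [q.1 == _]eq_sym; case: (p.1 == q.1); rewrite ?leq_total.
Qed.

Lemma subsets_not_ramsey (C : graph -> Prop) (G : graph) (f : {set 'I_a * 'I_b} -> gV G) r :
  C G -> injective f -> (forall A, @gvert G (f A)) ->
  (forall A B, A != B -> @gadj G (f A) (f B) <-> (A \subset B) || (B \subset A)) ->
  r <= a * b -> ~ ramsey_prop C b.+1 a.+1 r.
Proof.
move=> CG f_inj f_vert f_adj; apply: (rows_not_ramsey (e := f \o row_downset)) => //.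
- exact: inj_comp f_inj row_downset_inj.
- move=> p q pq; rewrite f_adj ?row_downset_comparable ?(inj_eq row_downset_inj) //.
  by split=> [/eqP | ->].
- by move=> p; apply: f_vert.
Qed.

End RowDownsets.

(* The extra point [None] keeps [1 != 0] when [T] is empty. *)
Definition bool_fun_ring (T : finType) := {ffun option T -> 'Z_2}.
HB.instance Definition _ (T : finType) :=
  GRing.PzRing.copy (bool_fun_ring T) {ffun option T -> 'Z_2}.
HB.instance Definition _ (T : finType) :=
  GRing.PzSemiRing_isNonZero.Build (bool_fun_ring T) (@ffun1_nonzero _ _ None).
HB.instance Definition _ (T : finType) :=
  GRing.PzRing_hasCommutativeMul.Build (bool_fun_ring T) (@ffun_mulC _ _).

Section BooleanFunctionRing.
Variable T : finType.

Lemma Z2_mulxx (x : 'Z_2) : (x * x)%R = x.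
Proof. by case: x => [[|[|k]] ?]; apply/val_inj. Qed.

Lemma bool_fun_ring_boolean : boolean_ring (bool_fun_ring T).
Proof. by move=> f; apply/ffunP => t; rewrite ffunE Z2_mulxx. Qed.

Definition indicator (A : {set T}) : bool_fun_ring T :=
  [ffun t => if t is Some u then (if u \in A then 1 else 0)%R else 0%R].

Lemma indicatorM A B : (indicator A * indicator B)%R = indicator (A :&: B).
Proof.
apply/ffunP => -[u|]; rewrite !ffunE ?mulr0 // inE.
by case: (u \in A); case: (u \in B); rewrite ?mulr0 ?mul0r ?mulr1.
Qed.

Lemma indicator_inj : injective indicator.
Proof.
move=> A B AB; apply/setP => u.
have := congr1 (fun f : bool_fun_ring T => f (Some u)) AB.
by rewrite !ffunE; do 2!case: (_ \in _).
Qed.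

Lemma indicator_idem A : Defs.idempotent (indicator A).
Proof. by rewrite /Defs.idempotent indicatorM setIid. Qed.

Lemma indicator_rdivides A B : rdivides (indicator A) (indicator B) <-> B \subset A.
Proof.
rewrite (rdivides_idemE _ (indicator_idem A)) indicatorM.
by split=> [/indicator_inj/esym/setIidPr | /setIidPr ->].
Qed.

End BooleanFunctionRing.

Lemma not_ramsey_BOOL n m r : r <= m * n -> ~ ramsey_prop BOOL n.+1 m.+1 r.
Proof.
apply: (subsets_not_ramsey (G := Idm (bool_fun_ring ('I_m * 'I_n)%type)) (f := @indicator _)).
- by exists (bool_fun_ring ('I_m * 'I_n)%type); split=> //; apply: bool_fun_ring_boolean.
- exact: indicator_inj.
- exact: indicator_idem.
- move=> A B AB; have AB' := inj_neq (@indicator_inj _) AB.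
  split=> [[_ [] /indicator_rdivides ->] | /orP [] sub]; rewrite ?orbT //; split=> //.
  + by right; apply/indicator_rdivides.
  + by left; apply/indicator_rdivides.
Qed.

Lemma not_ramsey_PO n m r : r <= m * n -> ~ ramsey_prop PO n.+1 m.+1 r.
Proof.
apply: (subsets_not_ramsey (G := PO_graph ({set 'I_m * 'I_n} : porderType _)) (f := id)) => //.
  by exists _, ({set 'I_m * 'I_n} : porderType _).
move=> A B /eqP AB; split=> [[_ [] sub] | /orP [] sub].
- by apply/orP; left.
- by apply/orP; right.
- by split=> //; left.
- by split=> //; right.
Qed.

Theorem theorem3p23 (n m : nat) (hn : (1 <= n)%N) (hm : (1 <= m)%N) :
  ramsey_number_is BOOL n m ((n - 1) * (m - 1) + 1)
  /\ ramsey_number_is IDM n m ((n - 1) * (m - 1) + 1)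
  /\ ramsey_number_is PO n m ((n - 1) * (m - 1) + 1).
Proof.
case: n hn => // n _; case: m hm => // m _; rewrite !subSS !subn0 addn1.
have ramsey_number C : ramsey_prop C n.+1 m.+1 (n * m).+1 ->
    (forall r, r <= m * n -> ~ ramsey_prop C n.+1 m.+1 r) ->
    ramsey_number_is C n.+1 m.+1 (n * m).+1.
  by move=> upper lower; split=> // r; rewrite ltnS mulnC; apply: lower.
split; [|split]; apply: ramsey_number.
- by apply: ramsey_prop_sub BOOL_IDM _; apply: ramsey_prop_IDM.
- exact: not_ramsey_BOOL.
- exact: ramsey_prop_IDM.
- by move=> r /not_ramsey_BOOL; apply: contra_not; apply: ramsey_prop_sub BOOL_IDM.
- exact: ramsey_prop_PO.
- exact: not_ramsey_PO.
Qed.
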